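(* Let $$A=\begin{bmatrix}-1&0&1&0&0&0\\0&-1&0&0&0&0\\0&0&3&0&0&0\\0&0&1&4&0&0\\0&0&0&0&4&0\\0&0&0&0&0&4\end{bmatrix},\qquad B=\begin{bmatrix}0\\1\\1\\0\\0\\1\end{bmatrix}.$$ Then $r_c(A,B)=3$, whereas $\min\{|J|: J\subseteq\{1,\dots,6\},\ (A,[B,I_6(:,J)])\text{ controllable}\}=2$.
   Context: $r_c(A,B)=\min\{\|[\Delta A,\Delta B]\|_0: \Delta A\in\mathbb{R}^{n\times n},\Delta B\in\mathbb{R}^{n\times m},(A+\Delta A,B+\Delta B)\text{ controllable}\}$, where $\|M\|_0$ is the number of nonzero entries of $M$. $I_6(:,J)$ is the submatrix of the $6\times6$ identity formed by columns indexed by $J$. Controllability means $\operatorname{rank}[B,AB,\dots,A^{n-1}B]=n$. *)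

From HB Require Import structures.
From mathcomp Require Import all_boot all_order all_algebra.
From mathcomp Require Import reals.
Set Implicit Arguments. Unset Strict Implicit. Unset Printing Implicit Defensive.
Import Order.TTheory GRing.Theory Num.Theory.
Local Open Scope ring_scope.

Definition ctrb_mx {F : fieldType} (n m : nat) (A : 'M[F]_n) (B : 'M[F]_(n, m)) :=
  \mxrow_(k < n) (A ^+ k *m B).

Definition controllable {F : fieldType} (n m : nat) (A : 'M[F]_n) (B : 'M[F]_(n, m)) :=
  \rank (ctrb_mx A B) = n.

Definition nnz {F : fieldType} (p q : nat) (M : 'M[F]_(p, q)) : nat :=
  #|[set ij : 'I_p * 'I_q | M ij.1 ij.2 != 0]|.

Definition is_min (P : nat -> Prop) (k : nat) : Prop :=
  P k /\ forall j, P j -> (k <= j)%N.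

Definition rc_eq {F : fieldType} (n m : nat) (A : 'M[F]_n) (B : 'M[F]_(n, m)) (k : nat) :=
  is_min (fun j => exists (dA : 'M[F]_n) (dB : 'M[F]_(n, m)),
            controllable (A + dA) (B + dB) /\ nnz (row_mx dA dB) = j) k.

(* I_n(:,J): columns of the identity indexed by J (in increasing order). *)
Definition idcols (F : fieldType) (n : nat) (J : {set 'I_n}) : 'M[F]_(n, #|J|) :=
  \matrix_(i < n, k < #|J|) (i == enum_val k)%:R.

Definition mx_of_seq (F : fieldType) (p q : nat) (s : seq (seq int)) : 'M[F]_(p, q) :=
  \matrix_(i < p, j < q) (nth 0 (nth [::] s i) j)%:~R.

Definition A7 (R : realType) : 'M[R]_6 := @mx_of_seq R 6 6
  [:: [:: -1; 0; 1; 0; 0; 0];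
      [:: 0; -1; 0; 0; 0; 0];
      [:: 0; 0; 3; 0; 0; 0];
      [:: 0; 0; 1; 4; 0; 0];
      [:: 0; 0; 0; 0; 4; 0];
      [:: 0; 0; 0; 0; 0; 4]]%Z.

Definition B7 (R : realType) : 'M[R]_(6, 1) := @mx_of_seq R 6 1
  [:: [:: 0]; [:: 1]; [:: 1]; [:: 0]; [:: 0]; [:: 1]]%Z.

From mathcomp Require Import all_boot all_order all_algebra.
From mathcomp Require Import reals.
From mathcomp Require Import ring lra.
Import Order.TTheory GRing.Theory Num.Theory.
Set Implicit Arguments.
Unset Strict Implicit.
Unset Printing Implicit Defensive.
Local Open Scope ring_scope.

(* Popov-Belevitch-Hautus: a nonzero row vector v with v A = l v and v B = 0
   makes (A, B) uncontrollable.  Counting rows and columns from 0, the pair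
   (A7, B7) has three such vectors, supported on the rows {4}, {2,3,5} and
   {0,1,2}: e_4 and (0,0,1,1,0,-1) for the eigenvalue 4 and (-4,-1,1,0,0,0)
   for -1.  A perturbation [dA, dB] vanishing on the support of one of them
   leaves it intact, so a perturbation restoring controllability touches row 4,
   one of the rows 2,3,5 and one of the rows 0,1,2.  With two nonzero entries
   this forces one entry in row 4 and one in row 2, and for each of the 7 x 7
   positions of these entries an explicit vector still witnesses
   uncontrollability.  The vectors e_4 and (0,0,1,1,0,-1) likewise show that a
   single extra input column e_i never suffices.  Controllability with three
   perturbed entries, or with the input columns e_2 and e_4, is checked by
   showing that v A^k B = 0 for all k forces v = 0. *)

Section Controllability.
Variable F : fieldType.

Lemma left_eigenvector_uncontrollable n m (A : 'M[F]_n) (B : 'M[F]_(n, m))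
    (v : 'rV_n) (l : F) :
  v != 0 -> v *m A = l *: v -> v *m B = 0 -> ~ controllable A B.
Proof.
move=> v_nz vA vB ctrl.
have vAk k : v *m A ^+ k = l ^+ k *: v.
  elim: k => [|k IHk]; first by rewrite expr0 mulmx1 scale1r.
  by rewrite exprSr -mulmxE mulmxA IHk -scalemxAl vA scalerA -exprSr.
have free : row_free (ctrb_mx A B) by rewrite /row_free ctrl.
move/negP: v_nz; apply; apply/eqP/(row_free_inj free).
rewrite mul0mx /ctrb_mx mul_mxrow -(mxrow0 (q_ := fun _ => m)).
by apply: eq_mxrow => k; rewrite mulmxA vAk -scalemxAl vB scaler0.
Qed.

Lemma controllable_of_left_kernel n m (A : 'M[F]_n) (B : 'M[F]_(n, m)) :
  (forall v : 'rV_n, (forall k, (k < n)%N -> v *m A ^+ k *m B = 0) -> v = 0) ->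
  controllable A B.
Proof.
move=> kerAB; apply/eqP; change (row_free (ctrb_mx A B)).
apply/inj_row_free => v vC0; apply: kerAB => k lt_kn.
have := congr1 (fun C => submxrow C (Ordinal lt_kn)) vC0.
by rewrite /ctrb_mx mul_mxrow mxrowK submxrow0 mulmxA.
Qed.

Lemma mulmx_support_eq0 p q (v : 'rV[F]_p) (M : 'M[F]_(p, q)) :
  (forall i, v 0 i != 0 -> row i M = 0) -> v *m M = 0.
Proof.
move=> Mv0; apply/rowP => c; rewrite !mxE big1 // => i _.
have [-> | /Mv0 /rowP /(_ c)] := eqVneq (v 0 i) 0; first by rewrite mul0r.
by rewrite !mxE => ->; rewrite mulr0.
Qed.

Lemma uncontrollable_perturbed n m (A : 'M[F]_n) (B : 'M[F]_(n, m))
    (M : 'M[F]_(n, n + m)) (v : 'rV_n) (l : F) :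
  v != 0 -> v *m A = l *: v -> v *m B = 0 ->
  (forall i, v 0 i != 0 -> row i M = 0) ->
  ~ controllable (A + lsubmx M) (B + rsubmx M).
Proof.
move=> v_nz vA vB /mulmx_support_eq0.
rewrite -[M]hsubmxK mul_mx_row -row_mx0 row_mxKl row_mxKr => /eq_row_mx [vdA vdB].
by apply: (left_eigenvector_uncontrollable (l := l) v_nz); rewrite mulmxDr ?vdA ?vdB addr0.
Qed.

Lemma mul_idcols_eq0 n (w : 'rV[F]_n) (J : {set 'I_n}) :
  w *m idcols F J = 0 <-> {in J, forall i, w 0 i = 0}.
Proof.
split=> [wJ0 i iJ | wJ0].
  have := congr1 (fun u : 'rV_#|J| => u 0 (enum_rank_in iJ i)) wJ0.
  rewrite !mxE (bigD1 i) //= big1 => [|k /negbTE ki]; rewrite !mxE enum_rankK_in //.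
    by rewrite eqxx mulr1 addr0.
  by rewrite ki mulr0.
apply/rowP => k; rewrite !mxE (bigD1 (enum_val k)) //= big1 => [|i /negbTE ik].
  by rewrite mxE eqxx mulr1 wJ0 ?enum_valP // addr0.
by rewrite mxE ik mulr0.
Qed.

End Controllability.

Lemma card_le2_eq (T : finType) (S : {set T}) (x y z : T) :
  (#|S| <= 2)%N -> x \in S -> y \in S -> z \in S -> x != y -> x != z -> y = z.
Proof.
move=> S_le2 xS yS zS xy xz; apply/eqP; apply: contraTT S_le2 => yz.
have sub : x |: (y |: [set z]) \subset S by apply/subsetP => t; rewrite !inE => /or3P [] /eqP ->.
rewrite -ltnNge; apply: leq_trans (subset_leq_card sub).
by rewrite !cardsU1 cards1 !inE negb_or xy xz yz.
Qed.

Lemma nnz_le2_eq (F : fieldType) p q (M : 'M[F]_(p, q)) (x y z : 'I_p * 'I_q) :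
  (nnz M <= 2)%N -> M x.1 x.2 != 0 -> M y.1 y.2 != 0 -> M z.1 z.2 != 0 ->
  x != y -> x != z -> y = z.
Proof. by move=> M_le2 Mx My Mz; apply: card_le2_eq M_le2 _ _ _; rewrite inE. Qed.

Section Example.
Variable R : realType.

Local Notation A := (A7 R).
Local Notation B := (B7 R).

Definition rv6 (s : seq R) : 'rV[R]_6 := \row_i s`_i.

Lemma rv6_neq0 (s : seq R) (i : 'I_6) : s`_i != 0 -> rv6 s != 0.
Proof. by apply: contra_neq => /rowP /(_ i); rewrite !mxE. Qed.

Lemma rv6_surj (v : 'rV[R]_6) :
  exists x0 x1 x2 x3 x4 x5, v = rv6 [:: x0; x1; x2; x3; x4; x5].
Proof.
exists (v 0 (inord 0)), (v 0 (inord 1)), (v 0 (inord 2)), (v 0 (inord 3)), (v 0 (inord 4)), (v 0 (inord 5)).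
by apply/rowP => -[[|[|[|[|[|[|//]]]]]] ?]; rewrite mxE /=;
  congr (v _ _); apply/val_inj; rewrite /= inordK.
Qed.

Ltac expand_mulmx := rewrite !mxE !big_ord_recr big_ord0 /= !mxE /=.
Ltac solve_row := apply/rowP => -[[|[|[|[|[|[|//]]]]]] ?]; expand_mulmx; ring.
Ltac solve_entry := apply/rowP => -[[|//] ?]; expand_mulmx; ring.

Definition uncontrollable_mode (v : 'rV[R]_6) (l : R) (rs : seq nat) :=
  [/\ v != 0, v *m A = l *: v, v *m B = 0 & forall i : 'I_6, v 0 i != 0 -> (i : nat) \in rs].

Ltac solve_mode k :=
  split; [ apply: (rv6_neq0 (i := @Ordinal 6 k isT)); by rewrite /= ?oner_eq0
         | solve_row | solve_entry
         | move=> -[[|[|[|[|[|[|//]]]]]] ?]; rewrite mxE /= ?eqxx ].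

Lemma mode4_on_4 : uncontrollable_mode (rv6 [:: 0; 0; 0; 0; 1; 0]) 4 [:: 4%N].
Proof. by solve_mode 4%N. Qed.

Lemma mode4_on_235 : uncontrollable_mode (rv6 [:: 0; 0; 1; 1; 0; -1]) 4 [:: 2; 3; 5]%N.
Proof. by solve_mode 2%N. Qed.

Lemma mode_neg1_on_012 : uncontrollable_mode (rv6 [:: -4; -1; 1; 0; 0; 0]) (-1) [:: 0; 1; 2]%N.
Proof. by solve_mode 2%N. Qed.

Lemma mode_survives_perturbation v l rs (M : 'M[R]_(6, 6 + 1)) :
  uncontrollable_mode v l rs -> (forall i : 'I_6, (i : nat) \in rs -> row i M = 0) ->
  ~ controllable (A + lsubmx M) (B + rsubmx M).
Proof.
case=> v_nz vA vB supp Mrs.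
by apply: (uncontrollable_perturbed v_nz vA vB) => i /supp /Mrs.
Qed.

Lemma mode_blocks_inputs v l rs (J : {set 'I_6}) :
  uncontrollable_mode v l rs -> (forall i : 'I_6, i \in J -> (i : nat) \notin rs) ->
  ~ controllable A (row_mx B (idcols R J)).
Proof.
case=> v_nz vA vB supp Jrs; apply: (left_eigenvector_uncontrollable v_nz vA).
have vJ : v *m idcols R J = 0.
  by apply/mul_idcols_eq0 => i /Jrs; apply: contraNeq => /supp.
by rewrite mul_mx_row vB vJ row_mx0.
Qed.

Definition two_entry_mx (j k : nat) (d e : R) : 'M[R]_(6, 6 + 1) :=
  \matrix_(i, c) if (i == 4 :> nat) && (c == j :> nat) then d
                 else if (i == 2 :> nat) && (c == k :> nat) then e else 0.

Tactic Notation "uncontrollable_by" uconstr(s) uconstr(l) :=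
  refine (@left_eigenvector_uncontrollable _ _ _ _ _ (rv6 s) l _ _ _);
  [ first [ by apply: (rv6_neq0 (i := @Ordinal 6 2 isT)); rewrite /= ?oner_eq0 ?pnatr_eq0
          | by apply: (rv6_neq0 (i := @Ordinal 6 4 isT)); rewrite /= ?oner_eq0 ?pnatr_eq0 ]
  | solve_row | solve_entry ].

(* Off column 4 the row-2 entry is absorbed by a witness vanishing on row 4,
   which hides the row-4 entry; in column 4 the witness has to depend on [j]. *)
Lemma two_entry_uncontrollable (j k : 'I_7) (d e : R) :
  ~ controllable (A + lsubmx (two_entry_mx j k d e)) (B + rsubmx (two_entry_mx j k d e)).
Proof.
have [-> | j4] := eqVneq (j : nat) 4%N.
  by uncontrollable_by [:: 0; 0; 0; 0; 1; 0] (4 + d).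
have [-> | k4] := eqVneq (k : nat) 4%N.
  case: j j4 => -[|[|[|[|[|[|[|//]]]]]]] ? //= _.
  - by uncontrollable_by [:: d; 0; 0; -d; 5; 0] 4.
  - by uncontrollable_by [:: 0; d; 0; 0; 5; -d] 4.
  - by uncontrollable_by [:: 0; 0; 0; -d; 1; 0] 4.
  - by uncontrollable_by [:: -100 - d * e; -25; 25; d * e; -5 * e; 0] (-1).
  - by uncontrollable_by [:: -100; -25 - d * e; 25; 0; -5 * e; d * e] (-1).
  - by uncontrollable_by [:: -100; 5 * d * e - 25; 25; 0; -5 * e; 0] (-1).
case: k k4 => -[|[|[|[|[|[|[|//]]]]]]] ? //= _.
- by uncontrollable_by [:: e; 0; 5; 5 - e; 0; -5] 4.
- by uncontrollable_by [:: 0; e; 5; 5; 0; -5 - e] 4.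
- by uncontrollable_by [:: 0; 0; 1; 1 - e; 0; -1] 4.
- by uncontrollable_by [:: e - 20; -5; 5; -e; 0; 0] (-1).
- by uncontrollable_by [:: -20; e - 5; 5; 0; 0; -e] (-1).
- by uncontrollable_by [:: -4; -1 - e; 1; 0; 0; 0] (-1).
Qed.

Lemma nnz_le2_two_entry (M : 'M[R]_(6, 6 + 1)) (i4 i2 : 'I_6) (j k : 'I_7) :
  (nnz M <= 2)%N -> i4 = 4%N :> nat -> i2 = 2%N :> nat -> M i4 j != 0 -> M i2 k != 0 ->
  M = two_entry_mx j k (M i4 j) (M i2 k).
Proof.
move=> M_le2 i4E i2E Mj Mk; apply/matrixP => i c; rewrite mxE.
case: ifP => [/andP [/eqP ii4 /eqP cj] | not4j].
  have -> : i = i4 by apply/val_inj; rewrite /= ii4 i4E.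
  by have -> : c = j by apply/val_inj.
case: ifP => [/andP [/eqP ii2 /eqP ck] | not2k].
  have -> : i = i2 by apply/val_inj; rewrite /= ii2 i2E.
  by have -> : c = k by apply/val_inj.
apply/eqP; apply: contraFT not2k => Mic.
have jk : (i4, j) != (i2, k) by apply/eqP => -[e42 _]; move: i4E; rewrite e42 i2E.
have jc : (i4, j) != (i, c).
  by apply: contraFneq not4j => -[<- <-]; rewrite i4E !eqxx.
have [<- <-] := nnz_le2_eq (x := (i4, j)) (y := (i2, k)) (z := (i, c)) M_le2 Mj Mk Mic jk jc.
by rewrite i2E !eqxx.
Qed.

Lemma nnz_le2_uncontrollable (M : 'M[R]_(6, 6 + 1)) :
  (nnz M <= 2)%N -> ~ controllable (A + lsubmx M) (B + rsubmx M).
Proof.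
move=> M_le2.
pose quiet (rs : seq nat) := [forall i : 'I_6, ((i : nat) \in rs) ==> (row i M == 0)].
have quietP (rs : seq nat) : quiet rs -> forall i : 'I_6, (i : nat) \in rs -> row i M = 0.
  by move=> /forallP Mrs i /(implyP (Mrs i)) /eqP.
have loudP (rs : seq nat) : ~~ quiet rs -> exists (i : 'I_6) (c : 'I_7), (i : nat) \in rs /\ M i c != 0.
  case/forallPn => i; rewrite negb_imply => /andP [irs Mi]; exists i.
  have [c Mic | M0] := pickP (fun c => M i c != 0); first by exists c.
  by case/eqP: Mi; apply/rowP => c; move/negbFE/eqP: (M0 c); rewrite !mxE.
have [/quietP | /loudP [i4 [j [/[1!inE] /eqP i4E Mj]]]] := boolP (quiet [:: 4%N]).
  exact: mode_survives_perturbation mode4_on_4.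
have [/quietP | /loudP [a [k [aE Mk]]]] := boolP (quiet [:: 2; 3; 5]%N).
  exact: mode_survives_perturbation mode4_on_235.
have [/quietP | /loudP [b [c [bE Mc]]]] := boolP (quiet [:: 0; 1; 2]%N).
  exact: mode_survives_perturbation mode_neg1_on_012.
have far4 (i : 'I_6) (d : 'I_7) : (i : nat) != 4%N -> (i4, j) != (i, d).
  by move=> i4'; apply: contraNneq i4' => -[<- _]; rewrite i4E.
have a4 : (a : nat) != 4%N by move: aE; rewrite !inE => /or3P [] /eqP ->.
have b4 : (b : nat) != 4%N by move: bE; rewrite !inE => /or3P [] /eqP ->.
have [ab _] := nnz_le2_eq (x := (i4, j)) (y := (a, k)) (z := (b, c)) M_le2 Mj Mk Mc
  (far4 a k a4) (far4 b c b4).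
have a2 : a = 2%N :> nat.
  by move: aE bE; rewrite -ab !inE => /or3P [] /eqP ->.
by rewrite (nnz_le2_two_entry M_le2 i4E a2 Mj Mk); apply: two_entry_uncontrollable.
Qed.

Definition perturbation3 : 'M[R]_(6, 6 + 1) :=
  \matrix_(i, c) (((i : nat), (c : nat)) \in [:: (2, 3); (3, 4); (4, 0)]%N)%:R.

Lemma nnz_perturbation3 : nnz perturbation3 = 3%N.
Proof.
rewrite /nnz (_ : [set ij | _] = (inord 2, inord 3) |: ((inord 3, inord 4) |: [set (inord 4, inord 0)])).
  by rewrite !cardsU1 cards1 !inE !xpair_eqE -!val_eqE /= !inordK.
apply/setP => -[i c]; rewrite !inE mxE pnatr_eq0 eqb0 negbK /= !xpair_eqE -!val_eqE /= !inordK //.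
by rewrite !in_cons in_nil !xpair_eqE orbF.
Qed.

Lemma rsubmx_perturbation3 : rsubmx perturbation3 = 0.
Proof.
by apply/matrixP => i c; apply/eqP; rewrite !mxE (ord1 c) pnatr_eq0 !in_cons !xpair_eqE !andbF.
Qed.

Lemma rv6_mulA x0 x1 x2 x3 x4 x5 :
  rv6 [:: x0; x1; x2; x3; x4; x5] *m A =
  rv6 [:: - x0; - x1; x0 + 3 * x2 + x3; 4 * x3; 4 * x4; 4 * x5].
Proof. by solve_row. Qed.

Lemma rv6_mulA_perturbation3 x0 x1 x2 x3 x4 x5 :
  rv6 [:: x0; x1; x2; x3; x4; x5] *m (A + lsubmx perturbation3) =
  rv6 [:: x4 - x0; - x1; x0 + 3 * x2 + x3; x2 + 4 * x3; x3 + 4 * x4; 4 * x5].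
Proof. by solve_row. Qed.

Lemma rv6_mulB x0 x1 x2 x3 x4 x5 :
  (rv6 [:: x0; x1; x2; x3; x4; x5] *m B) 0 0 = x1 + x2 + x5.
Proof. by expand_mulmx; ring. Qed.

Lemma controllable_perturbation3 :
  controllable (A + lsubmx perturbation3) (B + rsubmx perturbation3).
Proof.
rewrite rsubmx_perturbation3 addr0; apply: controllable_of_left_kernel => v.
have [x0 [x1 [x2 [x3 [x4 [x5 ->]]]]]] := rv6_surj v => vAB0.
have E k (lt_k6 : (k < 6)%N) := congr1 (fun M : 'M_1 => M 0 0) (vAB0 k lt_k6).
move: (E 0%N isT) (E 1%N isT) (E 2%N isT) (E 3%N isT) (E 4%N isT) (E 5%N isT).
rewrite !exprS expr0 -!mulmxE !mulmxA !mulmx1 !rv6_mulA_perturbation3 !rv6_mulB mxE.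
by move=> *; apply/rowP => -[[|[|[|[|[|[|//]]]]]] ?]; rewrite !mxE /=; lra.
Qed.

Lemma controllable_two_inputs :
  controllable A (row_mx B (idcols R [set inord 2; inord 4])).
Proof.
apply: controllable_of_left_kernel => v.
have [x0 [x1 [x2 [x3 [x4 [x5 ->]]]]]] := rv6_surj v => vAB0.
have E k (lt_k6 : (k < 6)%N) : let w := rv6 [:: x0; x1; x2; x3; x4; x5] *m A ^+ k in
    [/\ (w *m B) 0 0 = 0, w 0 (inord 2) = 0 & w 0 (inord 4) = 0].
  have := vAB0 k lt_k6; rewrite mul_mx_row -row_mx0 => /eq_row_mx [wB /mul_idcols_eq0 wJ].
  by rewrite /= wB mxE !wJ // !inE eqxx ?orbT.
move: (E 0%N isT) (E 1%N isT) (E 2%N isT).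
rewrite /= !exprS expr0 -!mulmxE !mulmxA !mulmx1 !rv6_mulA !rv6_mulB !mxE !inordK //=.
by move=> [? ? ?] [? ? ?] [? ? ?]; apply/rowP => -[[|[|[|[|[|[|//]]]]]] ?]; rewrite !mxE /=; lra.
Qed.

Lemma one_input_uncontrollable (J : {set 'I_6}) :
  (#|J| <= 1)%N -> ~ controllable A (row_mx B (idcols R J)).
Proof.
move=> J_le1; have [J4 | J4'] := boolP (inord 4 \in J).
  apply: (mode_blocks_inputs mode4_on_235) => i iJ.
  by move/card_le1_eqP: J_le1 => /(_ _ _ iJ J4) <-; rewrite inordK.
apply: (mode_blocks_inputs mode4_on_4) => i iJ; rewrite !inE.
apply: contraNneq J4' => i4; rewrite (_ : inord 4 = i) //.
by apply/val_inj; rewrite /= inordK ?i4.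
Qed.

End Example.

Theorem mainTheorem7 (R : realType) :
  rc_eq (A7 R) (B7 R) 3 /\
  is_min (fun k => exists J : {set 'I_6},
            #|J| = k /\ controllable (A7 R) (row_mx (B7 R) (idcols R J))) 2.
Proof.
split; split.
- exists (lsubmx (perturbation3 R)), (rsubmx (perturbation3 R)).
  by rewrite hsubmxK nnz_perturbation3; split=> //; exact: controllable_perturbation3.
- move=> k [dA [dB [ctrl <-]]]; rewrite leqNgt; apply/negP => nnz_lt3.
  by apply: (nnz_le2_uncontrollable nnz_lt3); rewrite row_mxKl row_mxKr.
- exists [set inord 2; inord 4]; split; last exact: controllable_two_inputs.
  by rewrite cards2 -val_eqE /= !inordK.
- move=> k [J [<- ctrl]]; rewrite leqNgt; apply/negP => J_lt2.
  exact: (one_input_uncontrollable J_lt2 ctrl).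
Qed.
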